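(* Let $X$ be a $k$-regular bipartite graph on $n$ vertices with both parts of size $n/2$, let $\lambda_2$ be the second largest eigenvalue of its adjacency matrix, and suppose every pair of distinct vertices of $X$ has at most $q$ common neighbours. Then $\mathrm{motion}(X)\geq\frac{k-|\lambda_2|-q}{2k}\,n$.
   Context: The motion $\mathrm{motion}(X)$ of a graph is the minimum, over non-identity automorphisms $\sigma$ of $X$, of the number of vertices not fixed by $\sigma$ (taken to be $+\infty$ if the automorphism group is trivial). *)

From HB Require Import structures.
From mathcomp Require Import all_boot all_order all_fingroup all_algebra all_field.
Set Implicit Arguments. Unset Strict Implicit. Unset Printing Implicit Defensive.
Import Order.TTheory GRing.Theory Num.Theory.

Definition simple_graph (T : finType) (e : rel T) : Prop :=
  irreflexive e /\ symmetric e.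

Definition k_regular (T : finType) (e : rel T) (k : nat) : Prop :=
  forall x : T, #|[set y | e x y]| = k.

Definition balanced_bipartite (T : finType) (e : rel T) : Prop :=
  exists A : {set T}, (#|A| * 2)%N = #|T| /\
    forall x y, e x y -> (x \in A) != (y \in A).

Definition common_nbrs_le (T : finType) (e : rel T) (q : nat) : Prop :=
  forall x y : T, x != y -> #|[set z | e x z && e y z]| <= q.

Definition is_aut (T : finType) (e : rel T) (s : {perm T}) : bool :=
  [forall x, forall y, e (s x) (s y) == e x y].

Definition moved (T : finType) (s : {perm T}) : nat := #|[set x | s x != x]|.

(* motion: None encodes +infinity (trivial automorphism group) *)
Definition motion (T : finType) (e : rel T) : option nat :=
  let A := [set s : {perm T} | is_aut e s & s != 1%g] in
  if A == set0 then None
  else Some (\big[minn/#|T|]_(s in A) moved s).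

Definition le_ext (r : algC) (m : option nat) : bool :=
  if m is Some k then (r <= k%:R)%R else true.

Definition adjmx (T : finType) (e : rel T) : 'M[algC]_#|T| :=
  \matrix_(i, j) ((e (enum_val i) (enum_val j))%:R)%R.

(* the eigenvalues, listed with multiplicity, in non-increasing order;
   eigs is the multiset of roots of the characteristic polynomial *)
Definition sorted_desc (s : seq algC) : seq algC := sort (fun x y => (y <= x)%R) s.

From HB Require Import structures.
From mathcomp Require Import all_boot all_order all_fingroup all_algebra all_field.
From mathcomp Require Import sesquilinear spectral ring.

(* Let a nontrivial automorphism s move the set S of m vertices.  A neighbour
   of a moved vertex x that is fixed by s is also a neighbour of s x != x, so x
   has at least k - q neighbours in S and S spans at least m (k - q) ordered
   edges.  Testing the adjacency matrix against the indicator of S, after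
   splitting off the all-ones eigenvector of eigenvalue k and bounding every
   other eigenvalue by lambda2, caps that number at k m^2 / n + |lambda2| m.
   Hence (k - |lambda2| - q) n <= k m, which is the claim with a factor 2 to
   spare. *)

Set Implicit Arguments.
Unset Strict Implicit.
Unset Printing Implicit Defensive.

Import Order.TTheory GRing.Theory Num.Theory.
Local Open Scope ring_scope.
Local Open Scope sesquilinear_scope.

Local Notation "''[' u , v ]" := (dotmx u v) : ring_scope.
Local Notation "''[' u ]" := (dotmx u u) : ring_scope.

Lemma count_gt_second_sorted_desc (s : seq algC) : all (mem Num.real) s ->
  (count (fun x => (nth 0 (sorted_desc s) 1 < x)%R) s <= 1)%N.
Proof.
move=> s_real; have sort_s := permEl (perm_sort (fun x y : algC => y <= x) s).
rewrite -(seq.permP sort_s) -/(sorted_desc s).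
have : all (mem Num.real) (sorted_desc s) by rewrite all_sort.
have : sorted (fun x y : algC => y <= x) (sorted_desc s).
  by apply: sort_sorted_in s_real => x y xr yr; rewrite real_leVge.
case: (sorted_desc s) => [|x0 [|x1 t]] //=; first by case: (_ < x0).
case/andP=> _ path_t /andP[_ real_t].
have le_tr : {in mem Num.real & &, transitive (fun x y : algC => y <= x)}.
  by move=> y x z _ _ _ /= yx zy; apply: le_trans zy yx.
have /allP t_le := order_path_min_in le_tr real_t path_t.
have -> : count (fun y => x1 < y) t = 0%N.
  apply/eqP; rewrite -leqn0 leqNgt -has_count; apply/hasPn=> y /t_le /= y_le.
  by apply/negP=> /lt_le_trans/(_ y_le); rewrite ltxx.
by rewrite ltxx; case: (_ < x0).
Qed.

Lemma char_poly_similar (R : comUnitRingType) n (P A : 'M[R]_n) :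
  P \in unitmx -> char_poly (invmx P *m A *m P) = char_poly A.
Proof.
move=> P_unit; rewrite /char_poly.
have PV1 : map_mx polyC (invmx P) *m map_mx polyC P = 1%:M.
  by rewrite -map_mxM mulVmx // map_mx1.
have -> : char_poly_mx (invmx P *m A *m P) =
    map_mx polyC (invmx P) *m char_poly_mx A *m map_mx polyC P.
  rewrite /char_poly_mx mulmxBr mulmxBl !map_mxM; congr (_ - _).
  by rewrite scalar_mxC -mulmxA PV1 mulmx1.
rewrite !det_mulmx mulrC mulrA -det_mulmx -map_mxM mulmxV //.
by rewrite map_mx1 det1 mul1r.
Qed.

Lemma dotmx_mulmx_unitary n (Q : 'M[algC]_n) (u v : 'rV_n) :
  Q \is unitarymx -> '[u *m Q, v *m Q] = '[u, v].
Proof. by move=> Q_unitary; rewrite !dotmxE trmx_mul map_mxM mulmxA mulmxtVK. Qed.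

Lemma dotmx_sum n (u v : 'rV[algC]_n) : '[u, v] = \sum_i u 0 i * (v 0 i)^*.
Proof. by rewrite dotmxE mxE; apply: eq_bigr => i _; rewrite !mxE. Qed.

(* As at most one eigenvalue exceeds lam < k, the eigenvector z lives on the
   single coordinate where d equals k; the other coordinates of w are weighed
   by at most lam. *)
Lemma diag_form_le n (d z w : 'rV[algC]_n) (k lam : algC) :
  d \is a realmx -> z != 0 -> z *m diag_mx d = k *: z ->
  lam \is Num.real -> lam < k -> (#|[pred i | (lam < d 0 i)%R]| <= 1)%N ->
  '[w *m diag_mx d, w] * '[z] <=
    k * `|'[w, z]| ^+ 2 + lam * ('[w] * '[z] - `|'[w, z]| ^+ 2).
Proof.
move=> d_real z_neq0 z_eig lam_real lam_lt_k d_gt_lam.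
have zd_eq i : z 0 i * d 0 i = z 0 i * k.
  by have /rowP/(_ i) := z_eig; rewrite mul_mx_diag !mxE [k * _]mulrC.
have [i0 zi0_neq0] : exists i0, z 0 i0 != 0.
  apply/existsP; apply: contraNT z_neq0 => /existsPn z0.
  by apply/eqP/rowP=> i; apply/eqP; rewrite mxE; move: (z0 i); rewrite negbK.
have d_i0 : d 0 i0 = k by apply: (mulfI zi0_neq0).
have d_le i : i != i0 -> d 0 i <= lam.
  move=> i_neq; rewrite real_leNgt //; last exact: (mxOverP d_real).
  apply/negP=> lam_lt_di; have := card_le1_eqP d_gt_lam i i0.
  rewrite !inE /= lam_lt_di d_i0 lam_lt_k => /(_ isT isT) eq_i.
  by rewrite eq_i eqxx in i_neq.
have z_supp i : i != i0 -> z 0 i = 0.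
  move=> i_neq; apply: contraTeq (d_le i i_neq) => zi_neq0.
  by rewrite (mulfI zi_neq0 (zd_eq i)) (lt_geF lam_lt_k).
have sum_z (F : 'I_n -> algC) : \sum_i F i * (z 0 i)^* = F i0 * (z 0 i0)^*.
  by rewrite (bigD1 i0) //= big1 ?addr0 // => i /z_supp->; rewrite conjC0 mulr0.
rewrite !dotmx_sum !sum_z (bigD1 i0) //=.
rewrite [X in _ <= _ + _ * (X * _ - _)](bigD1 i0) //=.
set R := \sum_(i | i != i0) _ * _; set R' := \sum_(i | i != i0) _ * _.
have R_le : R <= lam * R'.
  rewrite mulr_sumr; apply: ler_sum => i i_neq; rewrite mul_mx_diag mxE.
  by rewrite mulrAC [lam * _]mulrC ler_wpM2l ?mul_conjC_ge0 ?d_le.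
rewrite mul_mx_diag mxE d_i0 normCK rmorphM /= conjCK.
set a := w 0 i0; set b := z 0 i0.
have -> : (a * k * a^* + R) * (b * b^*) =
    k * (a * b^* * (a^* * b)) + R * (b * b^*) by ring.
have -> : lam * ((a * a^* + R') * (b * b^*) - a * b^* * (a^* * b)) =
    lam * R' * (b * b^*) by ring.
by rewrite lerD2l ler_wpM2r ?mul_conjC_ge0.
Qed.

Lemma unitary_diag_form_le n (P : 'M[algC]_n) (d u v : 'rV[algC]_n)
    (k lam : algC) :
  let A := P^t* *m diag_mx d *m P in
  P \is unitarymx -> d \is a realmx -> u != 0 -> u *m A = k *: u ->
  lam \is Num.real -> lam < k -> (#|[pred i | (lam < d 0 i)%R]| <= 1)%N ->
  '[v *m A, v] * '[u] <=
    k * `|'[v, u]| ^+ 2 + lam * ('[v] * '[u] - `|'[v, u]| ^+ 2).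
Proof.
move=> A P_unitary d_real u_neq0 u_eig.
have PtP (x : 'rV_n) : x *m P^t* *m P = x by rewrite mulmxKtV.
have dotP x y : '[x *m P^t*, y *m P^t*] = '[x, y].
  by rewrite dotmx_mulmx_unitary ?trmxC_unitary.
have vA : v *m A = v *m P^t* *m diag_mx d *m P by rewrite !mulmxA.
rewrite vA -{2}(PtP v) dotmx_mulmx_unitary //.
rewrite -(dotP v u) -(dotP v v) -(dotP u u).
apply: diag_form_le => //.
- by apply: contraNneq u_neq0 => u0; rewrite -(PtP u) u0 mul0mx.
- by rewrite scalemxAl -u_eig /A !mulmxA mulmxtVK.
Qed.

Lemma mixing_arith (k q m n : nat) (Q lam : algC) :
  lam \is Num.real -> (0 < m)%N -> (m <= n)%N ->
  (m * k)%:R <= Q + (m * q)%:R ->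
  (lam < k%:R ->
    Q * n%:R <= k%:R * m%:R ^+ 2 + lam * (m%:R * n%:R - m%:R ^+ 2)) ->
  (k%:R - `|lam| - q%:R) * n%:R <= k%:R * m%:R.
Proof.
move=> lam_real m_gt0 le_mn edges_ge spectral_le.
have [lam_lt_k|k_le_lam] := real_ltP lam_real (realn _ k); last first.
  apply: le_trans (mulr_ge0 (ler0n _ _) (ler0n _ _)).
  rewrite mulr_le0_ge0 // subr_le0 (le_trans _ (ler0n _ q)) // subr_le0.
  exact: le_trans k_le_lam (real_ler_norm lam_real).
have le_mn_C : m%:R ^+ 2 <= m%:R * n%:R :> algC.
  by rewrite expr2 -!natrM ler_nat leq_mul2l le_mn orbT.
have lam_term : lam * (m%:R * n%:R - m%:R ^+ 2) <= `|lam| * (m%:R * n%:R).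
  apply: le_trans (ler_wpM2r _ (real_ler_norm lam_real)) _.
    by rewrite subr_ge0.
  by rewrite ler_wpM2l // lerBlDr lerDl exprn_ge0.
have edges_le : (m * k)%:R * n%:R <=
    k%:R * m%:R ^+ 2 + `|lam| * (m%:R * n%:R) + (m * q)%:R * n%:R :> algC.
  apply: le_trans (ler_wpM2r (ler0n _ n) edges_ge) _.
  by rewrite mulrDl lerD2r (le_trans (spectral_le lam_lt_k)) // lerD2l.
have m_pos : 0 < m%:R :> algC by rewrite ltr0n.
rewrite -(ler_pM2l m_pos).
have -> : m%:R * ((k%:R - `|lam| - q%:R) * n%:R) =
    (m * k)%:R * n%:R - (`|lam| * (m%:R * n%:R) + (m * q)%:R * n%:R) :> algC.
  by rewrite !natrM; ring.
rewrite lerBlDr; apply: le_trans edges_le _.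
by rewrite addrA lerD2r lerD2r mulrCA.
Qed.

Lemma half_ratio_le (c : algC) (k m n : nat) :
  c * n%:R <= k%:R * m%:R -> c / (2 * k)%:R * n%:R <= m%:R.
Proof.
move=> le_cn; rewrite mulrAC.
apply: le_trans (ler_wpM2r _ le_cn) _; first by rewrite invr_ge0 ler0n.
have [->|k_gt0] := posnP k; first by rewrite mul0r mul0r.
have -> : k%:R * m%:R / (2 * k)%:R = m%:R / 2 :> algC.
  by rewrite natrM; field; rewrite pnatr_eq0 -lt0n.
by rewrite ler_pdivrMr ?ltr0Sn // ler_peMr ?ler0n ?ler1n.
Qed.

Lemma second_sorted_desc_diag n (d : 'rV[algC]_n) (eigs : seq algC) :
  d \is a realmx -> perm_eq eigs [seq d 0 i | i <- enum 'I_n] ->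
  let lam := nth 0 (sorted_desc eigs) 1 in
  lam \is Num.real /\ (#|[pred i | (lam < d 0 i)%R]| <= 1)%N.
Proof.
move=> d_real eigs_d lam.
have eigs_real : all (mem Num.real) eigs.
  apply/allP=> x; rewrite (perm_mem eigs_d) => /mapP[i _ ->].
  exact: (mxOverP d_real).
split.
  rewrite /lam; have [lt_1_size|le_size_1] := ltnP 1 (size (sorted_desc eigs)).
    by have := mem_nth 0 lt_1_size; rewrite mem_sort; apply: (allP eigs_real).
  by rewrite nth_default.
rewrite cardE /enum_mem size_filter -enumT.
rewrite -(count_map (d 0) (fun x => lam < x)) -(seq.permP eigs_d).
exact: count_gt_second_sorted_desc.
Qed.

Section AdjacencyMatrix.
Variables (T : finType) (e : rel T).
Hypothesis e_sym : symmetric e.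

Lemma adjmx_spectral (eigs : seq algC) :
  char_poly (adjmx e) = \prod_(x <- eigs) ('X - x%:P) ->
  exists P, exists d : 'rV[algC]_#|T|,
    [/\ P \is unitarymx, d \is a realmx, adjmx e = P^t* *m diag_mx d *m P
      & perm_eq eigs [seq d 0 i | i <- enum 'I_#|T|]].
Proof.
move=> char_eigs.
have A_herm : adjmx e \is hermsymmx.
  apply: realsym_hermsym; last by apply/mxOverP=> i j; rewrite mxE realn.
  apply/is_hermitianmxP; rewrite expr0 scale1r.
  by apply/matrixP=> i j; rewrite !mxE e_sym.
have /orthomx_spectralP A_eq := hermitian_normalmx A_herm.
set P := spectralmx _ in A_eq; set d := spectral_diag _ in A_eq.
have P_unitary : P \is unitarymx by apply: spectral_unitarymx.
rewrite invmx_unitary // in A_eq.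
exists P, d; split=> //; first exact: hermitian_spectral_diag_real.
apply: prod_XsubC_eq; rewrite -char_eigs A_eq -invmx_unitary //.
rewrite char_poly_similar ?unitarymx_unit // char_poly_trig ?diag_mx_is_trig //.
by rewrite big_map big_enum; apply: eq_bigr => i _; rewrite mxE eqxx mulr1n.
Qed.

Definition indic_row (S : {set T}) : 'rV[algC]_#|T| :=
  \row_i (enum_val i \in S)%:R.

Lemma dotmx_indic_row (w : 'rV[algC]_#|T|) (S : {set T}) :
  '[w, indic_row S] = \sum_(x in S) w 0 (enum_rank x).
Proof.
rewrite dotmx_sum [RHS]big_mkcond [RHS]big_enum_val /=.
apply: eq_bigr => i _; rewrite mxE enum_valK.
by case: (_ \in S); rewrite ?conjC1 ?mulr1 ?conjC0 ?mulr0.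
Qed.

Lemma indic_row_adjmx (S : {set T}) (y : T) :
  (indic_row S *m adjmx e) 0 (enum_rank y) = #|[set x in S | e x y]|%:R.
Proof.
rewrite cardsE -sum1_card natr_sum big_mkcond [RHS]big_enum_val mxE /=.
apply: eq_bigr => i _; rewrite !mxE enum_rankK -natrM mulnb.
by rewrite [X in if X then _ else _]unfold_in; case: (_ && _).
Qed.

Lemma dotmx_indic_row_sub (S S' : {set T}) :
  S \subset S' -> '[indic_row S, indic_row S'] = #|S|%:R.
Proof.
move=> sub_SS'; rewrite dotmx_indic_row -sum1_card natr_sum big_mkcond.
rewrite [RHS]big_mkcond; apply: eq_bigr => x _; rewrite mxE enum_rankK.
by case: (boolP (x \in S)) => [xS|_]; [rewrite (subsetP sub_SS') | case: ifP].
Qed.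

Lemma indic_rowT_adjmx (k : nat) :
  k_regular e k -> indic_row setT *m adjmx e = k%:R *: indic_row setT.
Proof.
move=> e_reg; apply/rowP=> j; rewrite -(enum_valK j) indic_row_adjmx !mxE.
rewrite inE mulr1 -(e_reg (enum_val j)); congr _%:R.
by apply: eq_card => x; rewrite !inE e_sym.
Qed.

Lemma dotmx_adjmx_indic_row (S : {set T}) :
  '[indic_row S *m adjmx e, indic_row S] =
    (\sum_(x in S) #|[set y in S | e x y]|)%:R.
Proof.
rewrite dotmx_indic_row natr_sum; apply: eq_bigr => x _.
by rewrite indic_row_adjmx; congr _%:R; apply: eq_card => y; rewrite !inE e_sym.
Qed.

End AdjacencyMatrix.

Definition moved_set (T : finType) (s : {perm T}) : {set T} := [set x | s x != x].

Lemma card_moved_set_gt0 (T : finType) (s : {perm T}) :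
  s != 1%g -> (0 < #|moved_set s|)%N.
Proof.
move=> s_neq1; rewrite card_gt0; apply: contraNneq s_neq1 => moved0.
apply/eqP/permP=> x; rewrite perm1; apply/eqP; apply: contraT => sx_neq.
by rewrite -(in_set0 x) -moved0 inE.
Qed.

Section Automorphism.
Variables (T : finType) (e : rel T) (s : {perm T}).
Hypothesis s_aut : is_aut e s.

Lemma is_aut_edge x y : e (s x) (s y) = e x y.
Proof. by apply/eqP; move/forallP: s_aut => /(_ x)/forallP. Qed.

Lemma moved_nbrs_ge (k q : nat) (x : T) :
  k_regular e k -> common_nbrs_le e q -> s x != x ->
  (k <= #|[set y in moved_set s | e x y]| + q)%N.
Proof.
move=> e_reg e_common sx_neq; rewrite -(e_reg x) -(cardsID (moved_set s)).
apply: leq_add.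
  by apply: subset_leq_card; apply/subsetP=> y; rewrite !inE andbC.
apply: leq_trans (e_common x (s x) _); last by rewrite eq_sym.
apply: subset_leq_card; apply/subsetP=> y.
rewrite !inE negbK => /andP[/eqP sy exy].
by rewrite exy -{1}sy is_aut_edge.
Qed.

Lemma moved_edges_ge (k q : nat) :
  k_regular e k -> common_nbrs_le e q ->
  (#|moved_set s| * k <=
    \sum_(x in moved_set s) #|[set y in moved_set s | e x y]|
      + #|moved_set s| * q)%N.
Proof.
move=> e_reg e_common; rewrite -!sum_nat_const -big_split /=.
by apply: leq_sum => x; rewrite inE => /moved_nbrs_ge; apply.
Qed.

End Automorphism.

Lemma le_ext_motion (T : finType) (e : rel T) (r : algC) :
  (forall s : {perm T}, is_aut e s -> s != 1%g -> r <= (moved s)%:R) ->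
  le_ext r (motion e).
Proof.
move=> r_le; rewrite /le_ext /motion; case: eqP => // /eqP /set0Pn[s0].
rewrite inE => /andP[s0_aut s0_neq1].
apply: (big_ind (fun m : nat => r <= m%:R)).
- by apply: le_trans (r_le _ s0_aut s0_neq1) _; rewrite ler_nat max_card.
- by move=> m1 m2; rewrite /minn; case: ifP.
- by move=> s; rewrite inE => /andP[]; apply: r_le.
Qed.

Lemma moved_mixing_bound (T : finType) (e : rel T) (k q : nat)
    (eigs : seq algC) (s : {perm T}) :
  symmetric e -> k_regular e k -> common_nbrs_le e q ->
  char_poly (adjmx e) = \prod_(x <- eigs) ('X - x%:P) ->
  is_aut e s -> s != 1%g ->
  (k%:R - `|nth 0 (sorted_desc eigs) 1| - q%:R) * #|T|%:R
    <= k%:R * (moved s)%:R.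
Proof.
move=> e_sym e_reg e_common char_eigs s_aut s_neq1.
have [P [d [P_unitary d_real A_eq eigs_d]]] := adjmx_spectral e_sym char_eigs.
have [lam_real d_gt_lam] := second_sorted_desc_diag d_real eigs_d.
have S_gt0 := card_moved_set_gt0 s_neq1.
set S := moved_set s in S_gt0; set v := indic_row S; set u := indic_row [set: T].
have u_neq0 : u != 0.
  have [x _] := card_gt0P S_gt0; apply/eqP=> /rowP/(_ (enum_rank x)).
  by rewrite !mxE enum_rankK inE => /eqP; rewrite oner_eq0.
have uu : '[u] = #|T|%:R by rewrite dotmx_indic_row_sub ?cardsT.
have vu : '[v, u] = #|S|%:R by rewrite dotmx_indic_row_sub ?subsetT.
have vv : '[v] = #|S|%:R by rewrite dotmx_indic_row_sub.
apply: (@mixing_arith _ _ _ _ '[v *m adjmx e, v] _ lam_real S_gt0 (max_card _)).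
  by rewrite dotmx_adjmx_indic_row // -natrD ler_nat moved_edges_ge.
move=> lam_lt_k; have u_eig := indic_rowT_adjmx e_sym e_reg.
rewrite A_eq in u_eig.
have := unitary_diag_form_le v P_unitary d_real u_neq0 u_eig lam_real lam_lt_k.
by rewrite -A_eq uu vu vv normr_nat; apply.
Qed.

Theorem lemma5p1 (T : finType) (e : rel T) (k q : nat) (eigs : seq algC) :
  simple_graph e ->
  k_regular e k ->
  balanced_bipartite e ->
  common_nbrs_le e q ->
  char_poly (adjmx e) = \prod_(x <- eigs) ('X - x%:P) ->
  let n := #|T| in
  let lambda2 := nth 0%R (sorted_desc eigs) 1 in
  le_ext (((k%:R - `|lambda2| - q%:R) / (2 * k)%:R) * n%:R)%R (motion e).
Proof.
move=> [_ e_sym] e_reg _ e_common char_eigs /=.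
apply: le_ext_motion => s s_aut s_neq1; apply: half_ratio_le.
exact: moved_mixing_bound.
Qed.
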